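(* Let $\mathcal{X}=\langle\mathsf{S},\mathsf{po},\mathsf{rf}\rangle$ be a $\textsf{VSC-read}$ instance and let $\langle\mathcal{X}',\mathsf{cap}',\mathsf{rf}'\rangle$ be the $\textsf{VCh-rf}$ instance constructed from it as described below. Then $\mathcal{X}$ is sequentially consistent if and only if $\langle\mathcal{X}',\mathsf{cap}',\mathsf{rf}'\rangle$ is consistent.
   Context: Channels and events. Each channel $\mathtt{ch}$ has a capacity $\mathsf{cap}(\mathtt{ch})\in\mathbb{N}$; $\mathtt{ch}$ is synchronous if $\mathsf{cap}(\mathtt{ch})=0$ and asynchronous otherwise. An event is a tuple $e=\langle id,\tau,\mathsf{op}(\mathtt{ch},\mathsf{val})\rangle$ with a unique identifier $id$, a thread $\tau$, an operation $\mathsf{op}\in\{\mathtt{snd},\mathtt{rcv}\}$, a channel $\mathtt{ch}$ and a value $\mathsf{val}$. An execution is a finite sequence $\sigma$ of distinct events. $\sigma$ is well-formed (w.r.t. $\mathsf{cap}$) if: (i) for every asynchronous $\mathtt{ch}$ and every prefix $\pi$ of $\sigma$, $R_\pi(\mathtt{ch})\le S_\pi(\mathtt{ch})\le R_\pi(\mathtt{ch})+\mathsf{cap}(\mathtt{ch})$, where $S_\pi(\mathtt{ch})$, $R_\pi(\mathtt{ch})$ are the numbers of send, resp. receive, events on $\mathtt{ch}$ in $\pi$; (ii) for every synchronous $\mathtt{ch}$, every send on $\mathtt{ch}$ is immediately followed in $\sigma$ by a receive on $\mathtt{ch}$ of a different thread, and every receive on $\mathtt{ch}$ is immediately preceded in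 $\sigma$ by a send on $\mathtt{ch}$ of a different thread; (iii) for every channel $\mathtt{ch}$ and every $i$, if $\sigma$ contains an $i$-th receive on $\mathtt{ch}$, then the $i$-th send on $\mathtt{ch}$ has the same value as it. The program order $\mathsf{po}_\sigma$ is the set of pairs $(e,f)$ with $e$ before $f$ in $\sigma$ and in the same thread; the reads-from relation $\mathsf{rf}_\sigma$ is the set of pairs $(s,r)$ such that for some channel $\mathtt{ch}$ and some $i$, $s$ is the $i$-th send and $r$ the $i$-th receive on $\mathtt{ch}$ in $\sigma$. An abstract execution is $\mathcal{X}=\langle \mathsf{S},\mathsf{po}\rangle$ where $\mathsf{S}$ is a finite set of events and $\mathsf{po}$ is a strict order that totally orders the events of each thread and relates no events of different threads. An instance of $\textsf{VCh-rf}$ is $\langle\mathcal{X},\mathsf{cap},\mathsf{rf}\rangle$ where $\mathsf{cap}$ is a capacity function on the channels occurring in $\mathsf{S}$ and $\mathsf{rf}$ is a set of pairs $(s,r)$ of a send and a receive event of $\mathsf{S}$ on the same channel; it is consistent if there is an execution $\sigma$ whose set of events is $\mathsf{S}$, with $\mathsf{po}_\sigma=\mathsf{po}$, $\sigma$ well-formed, and $\mathsf{rf}_\sigma=\mathsf{rf}$ (values are irrelevant here). $\textsf{VSC-read}$. An instance is $\langle\mathsf{S},\mathsf{po},\mathsf{rf}\rangle$ where $\mathsf{S}$ is a finite set of events of the form $\langle\tau,\mathsf{r}(x)\rangle$ (read of register $x$ by thread $\tau$) or $\langle\tau,\mathsf{w}(x)\rangle$ (write), $\mathsf{po}$ totally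 orders the events of each thread and relates no events of different threads, and $\mathsf{rf}$ maps each read to a write of the same register. It is sequentially consistent if there is a total order on $\mathsf{S}$ extending $\mathsf{po}$ such that for every $(w,r)\in\mathsf{rf}$ on register $x$, $w$ precedes $r$ and no other write to $x$ lies between $w$ and $r$. Construction. Let $\mathcal{R}$ be the set of registers. For a write $e$ let $p_e$ be the number of reads $f$ with $(e,f)\in\mathsf{rf}$, fix an arbitrary enumeration $f_1,\dots,f_{p_e}$ of them, and for $x\in\mathcal{R}$ let $m_x=\max\{p_e: e\text{ a write on }x\}$. $\mathcal{X}'$ has the same threads, channels $\{\mathtt{ch}_x^i: x\in\mathcal{R},1\le i\le m_x\}\cup\{\ell\}$, and $\mathsf{cap}'\equiv1$. Each $e\in\mathsf{S}$ of thread $\tau$ is replaced by a sequence $M(e)$ of fresh events of thread $\tau$: for a write $e$ on $x$, $M(e)=\mathtt{snd}(\ell)\cdot\mathtt{snd}(\mathtt{ch}_x^1)\cdots\mathtt{snd}(\mathtt{ch}_x^{m_x})\cdot\mathtt{rcv}(\mathtt{ch}_x^{p_e+1})\cdots\mathtt{rcv}(\mathtt{ch}_x^{m_x})\cdot\mathtt{rcv}(\ell)$; for the read $f_i$ (the $i$-th read of write $e$ on $x$), $M(f_i)=\mathtt{snd}(\ell)\cdot\mathtt{rcv}(\mathtt{ch}_x^i)\cdot\mathtt{rcv}(\ell)$. $\mathsf{S}'$ is the union of all events of all $M(e)$; $\mathsf{po}'$ orders events within each $M(e)$ by their position and orders all events of $M(e)$ before all events of $M(e')$ whenever $(e,e')\in\mathsf{po}$.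 $\mathsf{rf}'$: in each $M(e)$ the $\mathtt{rcv}(\ell)$ is matched with the $\mathtt{snd}(\ell)$ of the same $M(e)$; for each write $e$ and $1\le i\le p_e$, the $\mathtt{snd}(\mathtt{ch}_x^i)$ of $M(e)$ is matched with the $\mathtt{rcv}(\mathtt{ch}_x^i)$ of $M(f_i)$; for $p_e<j\le m_x$, the $\mathtt{snd}(\mathtt{ch}_x^j)$ of $M(e)$ is matched with the $\mathtt{rcv}(\mathtt{ch}_x^j)$ of $M(e)$. *)

From mathcomp Require Import all_boot.
Set Implicit Arguments. Unset Strict Implicit. Unset Printing Implicit Defensive.

(* An abstract execution <S, po> over an event type T: S is a finite
   duplicate-free list of events; every event has a thread [thr], an
   operation [issnd] (true = snd, false = rcv) and a channel [chan].
   Values are irrelevant (as stated in the paper), so condition (iii)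
   of well-formedness is omitted. *)
Section Channels.
Variables (T Th C : eqType) (thr : T -> Th) (issnd : T -> bool) (chan : T -> C).

Definition nsnd (pi : seq T) (ch : C) := count (fun a => issnd a && (chan a == ch)) pi.
Definition nrcv (pi : seq T) (ch : C) := count (fun a => ~~ issnd a && (chan a == ch)) pi.

Definition well_formed (cap : C -> nat) (sigma : seq T) : Prop :=
  (forall ch, 0 < cap ch -> forall n,
      nrcv (take n sigma) ch <= nsnd (take n sigma) ch <= nrcv (take n sigma) ch + cap ch)
  /\
  (forall ch, cap ch = 0 -> forall s1 a s2, sigma = s1 ++ a :: s2 -> chan a = ch ->
      (issnd a -> exists b s3, s2 = b :: s3 /\ ~~ issnd b /\ chan b = ch /\ thr b <> thr a)
   /\ (~~ issnd a -> exists s0 b, s1 = rcons s0 b /\ issnd b /\ chan b = ch /\ thr b <> thr a)).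

Definition exec_po (sigma : seq T) (a b : T) : bool :=
  [&& a \in sigma, b \in sigma, thr a == thr b & index a sigma < index b sigma].

Definition sends (sigma : seq T) ch := [seq a <- sigma | issnd a && (chan a == ch)].
Definition rcvs (sigma : seq T) ch := [seq a <- sigma | ~~ issnd a && (chan a == ch)].
Definition exec_rf (sigma : seq T) (s r : T) : Prop :=
  exists ch i, [&& i < size (sends sigma ch), nth s (sends sigma ch) i == s,
                   i < size (rcvs sigma ch) & nth r (rcvs sigma ch) i == r].

Definition vch_consistent (S : seq T) (po : rel T) (cap : C -> nat) (rf : rel T) : Prop :=
  exists sigma : seq T,
    [/\ uniq sigma, sigma =i S,
        (forall a b, a \in S -> b \in S -> po a b = exec_po sigma a b),
        well_formed cap sigma &
        (forall a b, a \in S -> b \in S -> rf a b <-> exec_rf sigma a b)].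
End Channels.

(* Events are the elements of a finite type E; [isw e] = e is a write,
   [reg e] its register, [rf] maps each read to its write (its value on
   writes is irrelevant). *)
Section VSC.
Variables (E : finType) (Th Rg : eqType) (thr : E -> Th) (isw : E -> bool)
  (reg : E -> Rg) (po : rel E) (rf : E -> E).

Definition vsc_po_ok : Prop :=
  [/\ forall e, ~~ po e e,
      forall e f g, po e f -> po f g -> po e g,
      forall e f, thr e = thr f -> e <> f -> po e f \/ po f e &
      forall e f, po e f -> thr e = thr f].

Definition vsc_rf_ok : Prop :=
  forall r, ~~ isw r -> isw (rf r) /\ reg (rf r) = reg r.

Definition seq_consistent : Prop :=
  exists s : seq E,
    [/\ uniq s, forall e, e \in s,
        (forall a b, po a b -> index a s < index b s) &
        (forall r, ~~ isw r ->
           index (rf r) s < index r s /\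
           forall w, isw w -> reg w = reg r -> w <> rf r ->
             ~ (index (rf r) s < index w s < index r s))].

Definition p_of (e : E) : nat := #|[pred f | ~~ isw f & rf f == e]|.
Definition m_of (x : Rg) : nat := \max_(e | isw e && (reg e == x)) p_of e.

(* Channels: None = l, Some (x, i) = ch_x^i *)
Definition chan_t := option (Rg * nat).

Variable num : E -> nat.  (* the enumeration: read f is f_(num f) of write rf f *)

(* M(e) as a list of (is_snd, channel) *)
Definition Mseq (e : E) : seq (bool * chan_t) :=
  if isw e then
    (true, None) ::
    [seq (true, Some (reg e, i)) | i <- iota 1 (m_of (reg e))] ++
    [seq (false, Some (reg e, j)) | j <- iota (p_of e).+1 (m_of (reg e) - p_of e)] ++
    [:: (false, None)]
  else [:: (true, None); (false, Some (reg e, num e)); (false, None)].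

(* events of X' : pairs (e, k) = k-th event of M(e) *)
Definition ev' := (E * nat)%type.
Definition S' : seq ev' :=
  flatten [seq [seq (e, k) | k <- iota 0 (size (Mseq e))] | e <- enum E].
Definition thr' (a : ev') : Th := thr a.1.
Definition issnd' (a : ev') : bool := (nth (true, None) (Mseq a.1) a.2).1.
Definition chan' (a : ev') : chan_t := (nth (true, None) (Mseq a.1) a.2).2.
Definition cap' (ch : chan_t) : nat := 1.
Definition po' (a b : ev') : bool :=
  ((a.1 == b.1) && (a.2 < b.2)) || po a.1 b.1.
Definition rf' (a b : ev') : bool :=
  (* rcv(l) of M(e) matched with snd(l) of M(e) *)
  [|| [&& a.1 == b.1, a.2 == 0 & b.2 == (size (Mseq a.1)).-1]
    (* snd(ch_x^i) of M(e), 1 <= i <= p_e, matched with rcv(ch_x^i) of M(f_i) *)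
    , [&& isw a.1, ~~ isw b.1, rf b.1 == a.1, a.2 == num b.1 & b.2 == 1]
    (* snd(ch_x^j) of M(e), p_e < j <= m_x, matched with rcv(ch_x^j) of M(e) *)
    | [&& isw a.1, b.1 == a.1, p_of a.1 < a.2 <= m_of (reg a.1)
        & b.2 == a.2 + (m_of (reg a.1) - p_of a.1)]].

Definition num_ok : Prop :=
  (forall f, ~~ isw f -> 1 <= num f <= p_of (rf f)) /\
  (forall f g, ~~ isw f -> ~~ isw g -> rf f = rf g -> num f = num g -> f = g).

Definition vch_instance_consistent : Prop :=
  vch_consistent thr' issnd' chan' S' po' cap' rf'.
End VSC.

From mathcomp Require Import all_boot zify.
Set Implicit Arguments. Unset Strict Implicit. Unset Printing Implicit Defensive.

(* Every event e of X becomes a block M(e) that opens by sending on the lock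
   channel l and closes by receiving from it. Since l has capacity one, the
   blocks of a consistent channel execution occupy disjoint intervals, so
   ordering the events of X by the starts of their blocks gives a total order
   extending po. The i-th read f of a write w on x receives on ch_x^i the
   message w sent there; a later write w' on x placed between w and f would also
   send on ch_x^i before f's receive, exceeding the capacity of ch_x^i. Conversely, laying out the blocks in a
   sequentially consistent order, each channel alternates a send with the
   receive it is matched with by rf', which gives a well-formed execution with
   reads-from rf'. *)

Section IndexFilter.
Variable T : eqType.
Implicit Types (s : seq T) (P : pred T).

Lemma index_inj_l s x y : x \in s -> index x s = index y s -> x = y.
Proof.
move=> xs e; have ys : y \in s by rewrite -index_mem -e index_mem.
exact: (index_inj x xs ys e).
Qed.

Lemma index_filter P s x : x \in s -> P x ->
  index x (filter P s) = count P (take (index x s) s).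
Proof.
elim: s => //= y s IH; rewrite in_cons; case: (eqVneq y x) => [->|ne] /=.
  by move=> _ ->; rewrite /= eqxx.
by move=> xs Px; case: (P y); rewrite /= ?(negbTE ne) IH.
Qed.

Lemma filter_take P s n : filter P (take n s) = take (count P (take n s)) (filter P s).
Proof.
elim: s n => [|y s IH] [|n] //=; first by rewrite take0.
by case: (P y); rewrite /= IH.
Qed.

Lemma count_take_leq P s m n : m <= n -> count P (take m s) <= count P (take n s).
Proof. by move=> le; rewrite -(subnKC le) takeD count_cat leq_addr. Qed.

Lemma count_take_nth P s x0 n : n < size s ->
  count P (take n.+1 s) = count P (take n s) + P (nth x0 s n).
Proof. by move=> lt; rewrite (take_nth x0 lt) -cats1 count_cat /= addn0. Qed.

Lemma count_take_nthP P s x : x \in s -> P x ->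
  count P (take (index x s).+1 s) = (count P (take (index x s) s)).+1.
Proof. by move=> xs Px; rewrite (count_take_nth _ x) ?index_mem // nth_index // Px addn1. Qed.

Lemma count_take_nthN P s x : x \in s -> ~~ P x ->
  count P (take (index x s).+1 s) = count P (take (index x s) s).
Proof.
by move=> xs /negbTE Px; rewrite (count_take_nth _ x) ?index_mem // nth_index // Px addn0.
Qed.

Lemma count_take_skip P s x0 m n : m <= n <= size s ->
  (forall k, m <= k < n -> ~~ P (nth x0 s k)) ->
  count P (take n s) = count P (take m s).
Proof.
move=> /andP[]; elim: n => [|n IH] mn ns H; first by move: mn; rewrite leqn0 => /eqP ->.
case: (ltnP m n.+1) => [|nm]; last by have -> : m = n.+1 by lia.
rewrite ltnS => mn'; rewrite (count_take_nth _ x0) // (negbTE (H n _)) ?addn0; last lia.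
by apply: IH; [| lia | move=> k hk; apply: H; lia].
Qed.

Lemma index_filter_next P s x0 a b : a \in s -> b \in s -> P a -> P b ->
  index a s < index b s ->
  (forall k, index a s < k < index b s -> ~~ P (nth x0 s k)) ->
  index b (filter P s) = (index a (filter P s)).+1.
Proof.
move=> as_ bs Pa Pb lt H; rewrite !index_filter //.
rewrite (count_take_skip (m := (index a s).+1) (x0 := x0)) ?count_take_nthP //.
by rewrite lt /= ltnW // index_mem.
Qed.

Lemma index_neq_lt s a b : a \in s -> a != b -> index a s <= index b s -> index a s < index b s.
Proof.
move=> as_ ab; rewrite leq_eqVlt => /orP[/eqP/(index_inj_l as_)/eqP|] //.
by rewrite (negbTE ab).
Qed.

Lemma index_cons2 (a b c : T) u : a \notin u -> b \notin u -> c \in u ->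
  index c [:: a, b & u] = (index c u).+2.
Proof.
move=> au bu cu /=; have /negbTE-> : a != c by apply: contraNneq au => ->.
by have /negbTE-> : b != c by apply: contraNneq bu => ->.
Qed.

Lemma index_cons2_inv (a b d : T) u n : d \in [:: a, b & u] ->
  index d [:: a, b & u] = n.+2 -> d \in u /\ index d u = n.
Proof.
move=> du /=; case: eqP => // ad; case: eqP => // bd [e]; split=> //.
by move: du; rewrite !in_cons => /or3P[/eqP de|/eqP de|//]; [case: ad | case: bd].
Qed.

End IndexFilter.

Section CapacityOne.
Variables (T Th C : eqType) (thr : T -> Th) (issnd : T -> bool) (chan : T -> C).

Definition snd_on ch a := issnd a && (chan a == ch).
Definition rcv_on ch a := ~~ issnd a && (chan a == ch).
Definition rank (s : seq T) (P : pred T) a := count P (take (index a s) s).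

Definition balanced (s : seq T) := forall ch n,
  count (rcv_on ch) (take n s) <= count (snd_on ch) (take n s)
                               <= count (rcv_on ch) (take n s) + 1.

Lemma well_formed_balanced s : well_formed thr issnd chan (fun=> 1) s -> balanced s.
Proof. by case=> H _ ch n; apply: H. Qed.

Lemma snd_on_rcv_onF ch a : snd_on ch a -> rcv_on ch a = false.
Proof. by rewrite /rcv_on => /andP[->]. Qed.

Lemma exec_rf_rank s a b : uniq s -> exec_rf issnd chan s a b ->
  exists ch, [/\ a \in s, b \in s, snd_on ch a, rcv_on ch b &
                 rank s (snd_on ch) a = rank s (rcv_on ch) b].
Proof.
move=> us [ch [i /and4P[i1 /eqP e1 i2 /eqP e2]]]; exists ch.
have : a \in sends issnd chan s ch by rewrite -e1 mem_nth.
have : b \in rcvs issnd chan s ch by rewrite -e2 mem_nth.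
rewrite !mem_filter => /andP[rb bs] /andP[sa as_]; split=> //.
rewrite /rank -!index_filter // -/(sends _ _ _ _) -/(rcvs _ _ _ _).
by rewrite -e1 -e2 !index_uniq // filter_uniq.
Qed.

Section Balanced.
Variables (s : seq T) (ch : C).
Hypothesis bal : balanced s.

Lemma matched_snd_before_rcv a b : a \in s -> b \in s -> snd_on ch a -> rcv_on ch b ->
  rank s (snd_on ch) a = rank s (rcv_on ch) b -> index a s < index b s.
Proof.
move=> as_ bs sa rb e; rewrite ltnNge; apply/negP => le.
have ba : b != a by apply: contraTneq rb => ->; rewrite snd_on_rcv_onF.
have lt := index_neq_lt bs ba le.
have /andP[h _] := bal ch (index b s).+1; rewrite count_take_nthP // in h.
by have := count_take_leq (snd_on ch) s lt; move: e h; rewrite /rank; lia.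
Qed.

Lemma matched_rcv_before_next_snd a b a' : a \in s -> b \in s -> a' \in s ->
  snd_on ch a -> rcv_on ch b -> snd_on ch a' ->
  rank s (snd_on ch) a = rank s (rcv_on ch) b ->
  index a s < index a' s -> index b s < index a' s.
Proof.
move=> as_ bs a's sa rb sa' e lt; rewrite ltnNge; apply/negP => le.
have a'b : a' != b by apply: contraTneq rb => <-; rewrite snd_on_rcv_onF.
have lt2 := index_neq_lt a's a'b le.
have /andP[_ h] := bal ch (index a' s).+1.
rewrite count_take_nthP // count_take_nthN ?snd_on_rcv_onF // in h.
have h1 := count_take_leq (snd_on ch) s lt; rewrite count_take_nthP // in h1.
have h2 := count_take_leq (rcv_on ch) s lt2.
rewrite count_take_nthN ?snd_on_rcv_onF // in h2.
by move: e h h1 h2; rewrite /rank; lia.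
Qed.

End Balanced.

Definition snd_rcv (q : T * T) := issnd q.1 && ~~ issnd q.2.
Definition flatten_pairs (P : seq (T * T)) := flatten [seq [:: q.1; q.2] | q <- P].

Lemma flatten_pairs_exists (R : rel T) u : uniq u ->
  (forall a b, R a b -> snd_rcv (a, b)) ->
  (forall a, a \in u -> issnd a -> exists b, [/\ R a b, b \in u & index b u = (index a u).+1]) ->
  (forall b, b \in u -> ~~ issnd b -> exists a, [/\ R a b, a \in u & index b u = (index a u).+1]) ->
  exists2 P, u = flatten_pairs P & all (fun q => R q.1 q.2) P.
Proof.
move=> + HR; have [n] := ubnP (size u); elim: n u => // n IH [|a u] sz uu Hs Hr.
  by exists [::].
have sa : issnd a by apply: contraT => /(Hr a (mem_head _ _)) [? []]; rewrite /= eqxx.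
have [b [Rab bu ib]] := Hs a (mem_head _ _) sa; have /andP[_ rb] := HR _ _ Rab.
have ab : a != b by apply: contraTneq sa => ->.
move: ib; rewrite /= eqxx (negbTE ab) => -[ib].
have [t eu] : exists t, u = b :: t.
  move: bu ib {sz uu Hs Hr}; rewrite in_cons eq_sym (negbTE ab) /=.
  by case: u => [|b' t] //=; case: eqP => [->|] //; exists t.
move: uu sz Hs Hr; rewrite {}eu {u bu ib} => /andP[].
rewrite in_cons negb_or => /andP[_ at_] /andP[bt ut] sz Hs Hr.
have shift c : c \in t -> index c [:: a, b & t] = (index c t).+2 by apply: index_cons2.
have sub c : c \in t -> c \in [:: a, b & t] by move=> ct; rewrite !inE ct !orbT.
have [P eP RP] : exists2 P, t = flatten_pairs P & all (fun q => R q.1 q.2) P.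
  apply: IH => //; first by move: sz; rewrite ltnS => /ltnW.
  - move=> c ct sc; have [d [Rcd dt]] := Hs c (sub c ct) sc.
    rewrite (shift c ct) => e; have [dt' e'] := index_cons2_inv dt e; by exists d; split.
  - move=> c ct sc; have [d [Rdc dt]] := Hr c (sub c ct) sc.
    rewrite (shift c ct) => e; move: dt; rewrite !in_cons => /or3P[/eqP ed|/eqP ed|dt].
    + by move: e; rewrite ed /= eqxx.
    + by have := HR _ _ Rdc; rewrite ed /snd_rcv /= (negbTE rb).
    + by exists d; split=> //; move: e; rewrite shift // => -[].
by exists ((a, b) :: P); rewrite /= ?Rab ?eP.
Qed.

Section Pairs.
Variable P : seq (T * T).
Hypothesis PsR : all snd_rcv P.

Lemma filter_flatten_pairs :
  filter issnd (flatten_pairs P) = map fst P /\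
  filter (predC issnd) (flatten_pairs P) = map snd P.
Proof.
elim: P PsR => [|q P' IH] //= /andP[/andP[-> /negbTE ->] /IH[-> ->]].
by [].
Qed.

Lemma count_take_flatten_pairs n :
  count (predC issnd) (take n (flatten_pairs P)) <= count issnd (take n (flatten_pairs P))
  <= count (predC issnd) (take n (flatten_pairs P)) + 1.
Proof.
elim: P PsR n => [|q P' IH] //= /andP[/andP[s1 r2] /IH{}IH] [|[|n]] //=.
  by rewrite s1.
by rewrite /= s1 (negbTE r2) -/(flatten_pairs P'); have := IH n; lia.
Qed.

Variables (s : seq T) (ch : C).
Hypothesis sP : filter (fun a => chan a == ch) s = flatten_pairs P.

Lemma balanced_on_flatten_pairs n :
  nrcv issnd chan (take n s) ch <= nsnd issnd chan (take n s) ch <=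
  nrcv issnd chan (take n s) ch + 1.
Proof.
have onch (Q : pred T) : count (fun a => Q a && (chan a == ch)) (take n s) =
    count Q (filter (fun a => chan a == ch) (take n s)) by rewrite count_filter.
rewrite /nrcv /nsnd (onch (predC issnd)) onch filter_take sP.
exact: count_take_flatten_pairs.
Qed.

Lemma exec_rf_flatten_pairs a b :
  (exists i, [&& i < size (sends issnd chan s ch), nth a (sends issnd chan s ch) i == a,
                 i < size (rcvs issnd chan s ch) & nth b (rcvs issnd chan s ch) i == b])
  <-> (a, b) \in P.
Proof.
have [sndP rcvP] := filter_flatten_pairs.
have es : sends issnd chan s ch = map fst P.
  by rewrite -sndP -sP -filter_predI; apply: eq_filter.
have er : rcvs issnd chan s ch = map snd P.
  by rewrite -rcvP -sP -filter_predI; apply: eq_filter.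
rewrite es er !size_map; split => [[i /and4P[i1 /eqP e1 _ /eqP e2]]|abP].
  rewrite !(nth_map (a, b)) // in e1 e2.
  have <- : nth (a, b) P i = (a, b) by move: e1 e2; case: nth => x y /= -> ->.
  exact: mem_nth.
exists (index (a, b) P); rewrite index_mem abP.
by rewrite !(nth_map (a, b)) ?index_mem // nth_index //= !eqxx.
Qed.

End Pairs.
End CapacityOne.

Section Construction.
Variables (E : finType) (Rg : eqType) (isw : E -> bool) (reg : E -> Rg)
  (rf : E -> E) (num : E -> nat).

Local Notation M := (Mseq isw reg rf num).
Local Notation p_ := (p_of isw rf).
Local Notation m_ := (m_of isw reg rf).
Local Notation is_snd := (issnd' isw reg rf num).
Local Notation chn := (chan' isw reg rf num).
Local Notation S'_ := (S' isw reg rf num).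

Lemma p_of_le_m_of e : isw e -> p_ e <= m_ (reg e).
Proof.
by move=> ew; apply: (@leq_bigmax_cond _ (fun e' => isw e' && (reg e' == reg e))); rewrite ew eqxx.
Qed.

Lemma size_Mseq_write e : isw e -> size (M e) = (m_ (reg e) + (m_ (reg e) - p_ e)).+2.
Proof. by move=> ew; rewrite /Mseq ew /= !size_cat !size_map !size_iota /=; lia. Qed.

Lemma Mseq_read e : ~~ isw e ->
  M e = [:: (true, None); (false, Some (reg e, num e)); (false, None)].
Proof. by rewrite /Mseq => /negbTE ->. Qed.

Lemma size_Mseq_gt1 e : 1 < size (M e).
Proof. by case ew: (isw e); [rewrite size_Mseq_write | rewrite Mseq_read ?ew]. Qed.

Lemma nth_Mseq_write e k : isw e -> k < size (M e) ->
  nth (true, None) (M e) k =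
  if k == 0 then (true, None)
  else if k <= m_ (reg e) then (true, Some (reg e, k))
  else if k <= m_ (reg e) + (m_ (reg e) - p_ e) then (false, Some (reg e, k - m_ (reg e) + p_ e))
  else (false, None).
Proof.
move=> ew; rewrite size_Mseq_write // /Mseq ew; have := p_of_le_m_of ew.
set m := m_ (reg e); set p := p_ e; case: k => [|k] //= pm lt.
rewrite nth_cat size_map size_iota; case: ifP => h1.
  by rewrite (nth_map 0) ?size_iota // nth_iota // h1 add1n.
rewrite nth_cat size_map size_iota; case: ifP => h2.
  rewrite (nth_map 0) ?size_iota // nth_iota // (_ : k < m + (m - p)); last lia.
  by rewrite (_ : p.+1 + (k - m) = k.+1 - m + p) //; lia.
have -> : k < m + (m - p) = false by lia.
by have -> : k - m - (m - p) = 0 by lia.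
Qed.

Lemma issnd_write e k : isw e -> k < size (M e) -> is_snd (e, k) = (k <= m_ (reg e)).
Proof.
move=> ew lt; rewrite /issnd' /= nth_Mseq_write //; move: lt; rewrite size_Mseq_write //.
by case: ifP => [/eqP->|_] //; case: ifP => // h1; case: ifP => // h2 _; rewrite h1.
Qed.

Lemma chan_write e k : isw e -> k < size (M e) -> chn (e, k) =
  if k == 0 then None
  else if k <= m_ (reg e) then Some (reg e, k)
  else if k <= m_ (reg e) + (m_ (reg e) - p_ e) then Some (reg e, k - m_ (reg e) + p_ e)
  else None.
Proof.
move=> ew lt; rewrite /chan' /= nth_Mseq_write //.
by case: ifP => // _; case: ifP => // _; case: ifP.
Qed.

Lemma snd_write e k : isw e -> 0 < k <= m_ (reg e) ->
  is_snd (e, k) /\ chn (e, k) = Some (reg e, k).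
Proof.
move=> ew /andP[k0 km]; have kS : k < size (M e) by rewrite size_Mseq_write //; lia.
rewrite issnd_write // chan_write // km; have -> : (k == 0) = false by lia.
by [].
Qed.

Lemma issnd_read e k : ~~ isw e -> k < 3 -> is_snd (e, k) = (k == 0).
Proof. by move=> ew; rewrite /issnd' /= Mseq_read //; case: k => [|[|[|]]]. Qed.

Lemma chan_read e k : ~~ isw e -> chn (e, k) = if k == 1 then Some (reg e, num e) else None.
Proof. by move=> ew; rewrite /chan' /= Mseq_read //; case: k => [|[|[|[]]]]. Qed.

Lemma issnd_first e : is_snd (e, 0).
Proof. by rewrite /issnd' /Mseq; case: (isw e). Qed.

Lemma chan_first e : chn (e, 0) = None.
Proof. by rewrite /chan' /Mseq; case: (isw e). Qed.

Lemma issnd_last e : is_snd (e, (size (M e)).-1) = false.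
Proof.
case ew: (isw e); last by rewrite issnd_read ?ew // Mseq_read ?ew.
by rewrite issnd_write // size_Mseq_write //=; lia.
Qed.

Lemma chan_None e k : k < size (M e) ->
  (chn (e, k) == None) = (k == 0) || (k == (size (M e)).-1).
Proof.
case ew: (isw e); last by rewrite chan_read ?ew // Mseq_read ?ew //; case: k => [|[|[|]]].
move=> lt; rewrite chan_write //; move: lt; rewrite size_Mseq_write //=.
have noneF (y : Rg * nat) : (Some y == None) = false by [].
case: ifP => [/eqP ->|h0] //; case: ifP => h1; last case: ifP => h2;
  rewrite ?noneF ?eqxx /= => lt; [| apply/esym/eqP | ]; lia.
Qed.

Lemma chan_Some_reg e k x i : chn (e, k) = Some (x, i) -> x = reg e.
Proof.
rewrite /chan' /=; case: (ltnP k (size (M e))) => [lt|ge]; last by rewrite nth_default.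
case ew: (isw e); last first.
  by rewrite Mseq_read ?ew //; case: k {lt} => [|[|[|k]]] //=; [case | rewrite nth_nil].
rewrite nth_Mseq_write //; case: ifP => // _; case: ifP => _; first by case.
by case: ifP => // _ [].
Qed.

Definition block e := [seq (e, k) | k <- iota 0 (size (M e))].
Definition layout (s : seq E) := flatten [seq block e | e <- s].

Lemma S'_layout : S'_ = layout (enum E).
Proof. by []. Qed.

Lemma mem_block x e k : ((e, k) \in block x) = (e == x) && (k < size (M e)).
Proof.
apply/mapP/andP => [[k' + [-> ->]]|[/eqP -> lt]]; first by rewrite mem_iota.
by exists k; rewrite ?mem_iota.
Qed.

Lemma mem_layout s e k : ((e, k) \in layout s) = (e \in s) && (k < size (M e)).
Proof. by elim: s => //= x s IH; rewrite mem_cat IH mem_block in_cons andb_orl. Qed.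

Lemma mem_S' e k : ((e, k) \in S'_) = (k < size (M e)).
Proof. by rewrite S'_layout mem_layout mem_enum. Qed.

Lemma uniq_layout s : uniq s -> uniq (layout s).
Proof.
elim: s => //= x s IH /andP[xs us]; rewrite cat_uniq -/(layout s) IH // andbT.
rewrite map_inj_uniq ?iota_uniq /=; last by move=> ? ? [].
apply/hasPn => -[e k]; rewrite mem_layout mem_block => /andP[es _].
by apply/negP => /andP[/eqP ex _]; rewrite -ex es in xs.
Qed.

Definition offset (s : seq E) n := sumn [seq size (M e) | e <- take n s].

Lemma index_layout s e k : e \in s -> k < size (M e) ->
  index (e, k) (layout s) = offset s (index e s) + k.
Proof.
elim: s => //= x s IH; rewrite index_cat mem_block in_cons.
case: (eqVneq e x) => [->|nex] /= es lt; last by rewrite IH // size_map size_iota addnA.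
rewrite lt /offset add0n /block index_map ?index_iota ?mem_iota //=; last by move=> ? ? [].
by rewrite -{1}(add0n k) -(nth_iota 0 0 lt) index_uniq ?size_iota ?iota_uniq.
Qed.

Lemma offset_index_lt s e e' : e \in s -> index e s < index e' s ->
  offset s (index e s) + size (M e) <= offset s (index e' s).
Proof.
move=> es lt; rewrite /offset -(subnKC lt) takeD map_cat sumn_cat (take_nth e) ?index_mem //.
by rewrite -cats1 map_cat sumn_cat nth_index //=; lia.
Qed.

Lemma index_layout_lt s e k e' k' : e \in s -> e' \in s ->
  k < size (M e) -> k' < size (M e') ->
  (index (e, k) (layout s) < index (e', k') (layout s)) =
  (index e s < index e' s) || ((e == e') && (k < k')).
Proof.
move=> es e's lt lt'; rewrite !index_layout //.
case: (ltngtP (index e s) (index e' s)) => h.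
- by have := offset_index_lt es h; lia.
- have := offset_index_lt e's h; rewrite (_ : e == e' = false); first lia.
  by apply: contraTF h => /eqP ->; rewrite ltnn.
- by rewrite (index_inj_l es h) eqxx /= ltn_add2l.
Qed.

End Construction.

Section Partners.
Variables (E : finType) (Rg : eqType) (isw : E -> bool) (reg : E -> Rg)
  (rf : E -> E) (num : E -> nat).
Hypotheses (rf_ok : vsc_rf_ok isw reg rf) (num_okP : num_ok isw rf num).

Local Notation M := (Mseq isw reg rf num).
Local Notation p_ := (p_of isw rf).
Local Notation m_ := (m_of isw reg rf).
Local Notation is_snd := (issnd' isw reg rf num).
Local Notation S'_ := (S' isw reg rf num).
Local Notation rf'_ := (rf' isw reg rf num).

(* num is injective on the p_w reads of w and lands in [1, p_w], hence onto *)
Lemma exists_read_num w i : isw w -> 1 <= i <= p_ w ->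
  exists f, [/\ ~~ isw f, rf f = w & num f = i].
Proof.
move=> ww hi; have [num_range num_inj] := num_okP.
set A := enum [pred f | ~~ isw f & rf f == w].
have uA : uniq [seq num f | f <- A].
  rewrite map_inj_in_uniq ?enum_uniq // => f g.
  by rewrite !mem_enum => /andP[f1 /eqP f2] /andP[g1 /eqP g2]; apply: num_inj; rewrite ?f2 ?g2.
have sub : {subset [seq num f | f <- A] <= iota 1 (p_ w)}.
  move=> n /mapP[f]; rewrite mem_enum => /andP[f1 /eqP f2] ->; rewrite mem_iota.
  by have := num_range f f1; rewrite f2; lia.
have sz : size (iota 1 (p_ w)) <= size [seq num f | f <- A].
  by rewrite size_iota size_map -cardE.
have [_ eqA] := uniq_min_size uA sub sz.
have : i \in iota 1 (p_ w) by rewrite mem_iota; lia.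
by rewrite -eqA => /mapP[f]; rewrite mem_enum => /andP[f1 /eqP f2] ->; exists f.
Qed.

Lemma rf'_from_snd a : a \in S'_ -> is_snd a -> exists b, rf'_ a b /\ b \in S'_.
Proof.
case: a => e k; rewrite mem_S' => lt sa.
have [->|k0] := eqVneq k 0.
  exists (e, (size (M e)).-1); rewrite mem_S' /rf' /= !eqxx.
  by have := size_Mseq_gt1 isw reg rf num e; lia.
case ew: (isw e); last first.
  have lt3 : k < 3 by move: lt; rewrite Mseq_read ?ew.
  by move: sa; rewrite issnd_read ?ew // (negbTE k0).
move: sa; rewrite issnd_write // => km; have pm := p_of_le_m_of reg rf ew.
case: (leqP k (p_ e)) => kp.
  have [f [fr rfe nf]] : exists f, [/\ ~~ isw f, rf f = e & num f = k].
    by apply: exists_read_num => //; lia.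
  by exists (f, 1); rewrite mem_S' Mseq_read // /rf' /= ew fr rfe nf !eqxx orbT.
exists (e, k + (m_ (reg e) - p_ e)); rewrite mem_S' size_Mseq_write //.
by rewrite /rf' /= ew !eqxx kp km !orbT; lia.
Qed.

Lemma rf'_to_rcv b : b \in S'_ -> ~~ is_snd b -> exists a, rf'_ a b /\ a \in S'_.
Proof.
case: b => e k; rewrite mem_S' => lt rb.
have [->|kl] := eqVneq k (size (M e)).-1.
  exists (e, 0); rewrite mem_S' /rf' /= !eqxx.
  by have := size_Mseq_gt1 isw reg rf num e; lia.
case ew: (isw e); last first.
  have k1 : k = 1.
    move: rb kl lt; rewrite Mseq_read ?ew //= => + + lt3.
    by rewrite issnd_read ?ew //; move: lt3; case: k => [|[|[|]]].
  have [rfw rfreg] := rf_ok (negbT ew); have rng := num_okP.1 e (negbT ew).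
  exists (rf e, num e); rewrite mem_S' /rf' /= k1 rfw ew !eqxx orbT size_Mseq_write //.
  by have := p_of_le_m_of reg rf rfw; lia.
move: rb; rewrite issnd_write // -ltnNge => km; have pm := p_of_le_m_of reg rf ew.
move: lt kl; rewrite size_Mseq_write //= => lt kl.
exists (e, k - m_ (reg e) + p_ e); rewrite mem_S' size_Mseq_write //.
rewrite /rf' /= ew !eqxx /= (_ : p_ e < _ <= _); last lia.
have -> : k == k - m_ (reg e) + p_ e + (m_ (reg e) - p_ e) by apply/eqP; lia.
by rewrite orbT; lia.
Qed.

End Partners.

Section Forward.
Variables (E : finType) (Th Rg : eqType) (thr : E -> Th) (isw : E -> bool)
  (reg : E -> Rg) (po : rel E) (rf : E -> E) (num : E -> nat).
Hypotheses (po_ok : vsc_po_ok thr po) (rf_ok : vsc_rf_ok isw reg rf)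
  (num_okP : num_ok isw rf num).

Local Notation M := (Mseq isw reg rf num).
Local Notation p_ := (p_of isw rf).
Local Notation m_ := (m_of isw reg rf).
Local Notation is_snd := (issnd' isw reg rf num).
Local Notation chn := (chan' isw reg rf num).
Local Notation S'_ := (S' isw reg rf num).
Local Notation rf'_ := (rf' isw reg rf num).

Variable s : seq E.
Hypotheses (s_uniq : uniq s) (s_all : forall e, e \in s)
  (s_po : forall a b, po a b -> index a s < index b s)
  (s_rf : forall r, ~~ isw r ->
           index (rf r) s < index r s /\
           forall w, isw w -> reg w = reg r -> w <> rf r ->
             ~ (index (rf r) s < index w s < index r s)).

Local Notation sigma := (layout isw reg rf num s).
Local Notation ix a := (index a sigma).

Lemma mem_sigma a : (a \in sigma) = (a \in S'_).
Proof. by case: a => e k; rewrite mem_layout mem_S' s_all. Qed.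

Lemma index_sigma_lt e k e' k' : (e, k) \in S'_ -> (e', k') \in S'_ ->
  (ix (e, k) < ix (e', k')) = (index e s < index e' s) || ((e == e') && (k < k')).
Proof. by rewrite !mem_S' => lt lt'; rewrite index_layout_lt. Qed.

Definition adjacent a b := [/\ is_snd a, ~~ is_snd b, chn b = chn a, ix a < ix b &
  forall c, c \in S'_ -> ix a < ix c < ix b -> chn c != chn a].

Lemma adjacent_index_filter a b : a \in S'_ -> b \in S'_ -> adjacent a b ->
  index b [seq c <- sigma | chn c == chn a] = (index a [seq c <- sigma | chn c == chn a]).+1.
Proof.
rewrite -!mem_sigma => aS bS [_ _ ba lt between].
apply: (index_filter_next (x0 := a)) => //=; rewrite ?ba // => k /andP[ak kb].
have ks : k < size sigma by apply: leq_trans kb (index_size _ _).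
by apply: between; rewrite ?index_uniq ?uniq_layout ?ak // -mem_sigma mem_nth.
Qed.

Lemma lock_adjacent e : adjacent (e, 0) (e, (size (M e)).-1).
Proof.
have gt1 := size_Mseq_gt1 isw reg rf num e.
have eS k : k < size (M e) -> (e, k) \in S'_ by rewrite mem_S'.
split; rewrite ?issnd_first ?issnd_last ?chan_first //.
- by apply/eqP; rewrite chan_None ?eqxx ?orbT //; lia.
- by rewrite index_sigma_lt ?eS ?ltnn ?eqxx //=; lia.
move=> [g j] gS; rewrite !index_sigma_lt ?eS //; try lia.
move: gS; rewrite mem_S'; have [<-|_] := eqVneq e g => js; last first.
  by rewrite /= !orbF => /andP[]; lia.
by rewrite ltnn /= => /andP[j0 jl]; rewrite chan_None //; lia.
Qed.

Lemma read_channel_free f g j : ~~ isw f ->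
  index (rf f) s < index g s < index f s -> chn (g, j) != Some (reg f, num f).
Proof.
move=> fr wgf; have [rfw rfreg] := rf_ok fr; have [_ no_write] := s_rf fr.
have neq_rf : g <> rf f by move=> e; move: wgf; rewrite e ltnn.
apply/eqP; case gw: (isw g).
  by move/chan_Some_reg => rg; apply: (no_write g gw (esym rg) neq_rf wgf).
rewrite chan_read ?gw //; case: ifP => // _ [rg ng].
have [rgw rgreg] := rf_ok (negbT gw); have [rfg_g no_write_g] := s_rf (negbT gw).
have [same|ne] := eqVneq (rf g) (rf f).
  by move: wgf; rewrite (num_okP.2 g f (negbT gw) fr same ng) ltnn andbF.
move/andP: wgf => [wg gf].
case: (ltngtP (index (rf g) s) (index (rf f) s)) => c.
- by apply: (no_write_g (rf f) rfw); [rewrite rfreg rg | apply/eqP; rewrite eq_sym | lia].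
- by apply: (no_write (rf g) rgw); [rewrite rgreg rg | apply/eqP | lia].
- by move/eqP: ne; apply; apply: index_inj_l c.
Qed.

Lemma read_adjacent f : ~~ isw f -> adjacent (rf f, num f) (f, 1).
Proof.
move=> fr; have [rfw rfreg] := rf_ok fr; have rng := num_okP.1 f fr.
have pm := p_of_le_m_of reg rf rfw; have [wf _] := s_rf fr.
have nS : num f < size (M (rf f)) by rewrite size_Mseq_write //; lia.
have wS : (rf f, num f) \in S'_ by rewrite mem_S'.
have fS : (f, 1) \in S'_ by rewrite mem_S' Mseq_read.
have [sw cw] : is_snd (rf f, num f) /\ chn (rf f, num f) = Some (reg f, num f).
  by rewrite -rfreg; apply: snd_write => //; lia.
split; rewrite ?cw //.
- by rewrite issnd_read.
- by rewrite chan_read.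
- by rewrite index_sigma_lt // wf.
move=> [g j] gS; rewrite !index_sigma_lt //; move: gS; rewrite mem_S'.
have [->|ng] := eqVneq g (rf f) => js.
  rewrite ltnn /= => /andP[nj _]; rewrite chan_write // rfreg.
  case: ifP => // j0; case: ifP => jm; first by apply/eqP => -[]; lia.
  by case: ifP => // jm'; apply/eqP => -[]; lia.
have [->|nf] := eqVneq g f.
  by rewrite ltnn /= => /andP[_]; rewrite ltnS leqn0 => /eqP ->; rewrite chan_first.
rewrite !orbF => wgf; exact: read_channel_free.
Qed.

Lemma local_adjacent e k : isw e -> p_ e < k <= m_ (reg e) ->
  adjacent (e, k) (e, k + (m_ (reg e) - p_ e)).
Proof.
move=> ew /andP[pk km]; have pm := p_of_le_m_of reg rf ew.
have sz := size_Mseq_write reg rf num ew; set k' := k + _.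
have kS : k < size (M e) by rewrite sz; lia.
have k'S : k' < size (M e) by rewrite sz; lia.
have [sk ce] : is_snd (e, k) /\ chn (e, k) = Some (reg e, k) by apply: snd_write => //; lia.
split; rewrite ?ce //.
- by rewrite issnd_write //; lia.
- rewrite chan_write //; have -> : (k' == 0) = false by lia.
  have -> : (k' <= m_ (reg e)) = false by lia.
  have -> : k' <= m_ (reg e) + (m_ (reg e) - p_ e) by lia.
  by have -> : k' - m_ (reg e) + p_ e = k by lia.
- by rewrite index_sigma_lt ?mem_S' // ltnn eqxx /=; lia.
move=> [g j] gS; rewrite !index_sigma_lt //; try by rewrite mem_S'.
move: gS; rewrite mem_S'.
have [<-|_] := eqVneq e g => js; last by rewrite /= !orbF => /andP[]; lia.
rewrite ltnn /= => /andP[kj jk]; rewrite chan_write //.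
case: ifP => // j0; case: ifP => jm; first by apply/eqP => -[]; lia.
by case: ifP => // jm'; apply/eqP => -[]; lia.
Qed.

Lemma rf'_adjacent a b : rf'_ a b -> adjacent a b.
Proof.
case: a b => [e k] [e' k'] /or3P[] /=.
- by case/and3P=> /eqP <- /eqP -> /eqP ->; apply: lock_adjacent.
- case/and5P=> _ fr /eqP <- /eqP -> /eqP ->; exact: read_adjacent.
- by case/and4P=> ew /eqP -> kr /eqP ->; apply: local_adjacent.
Qed.

Lemma po_sigma a b : a \in S'_ -> b \in S'_ -> po' po a b = exec_po (thr' thr) sigma a b.
Proof.
case: a b => [e k] [e' k'] aS bS; have [irr _ total same_thr] := po_ok.
rewrite /po' /exec_po !mem_sigma aS bS index_sigma_lt //= /thr' /=.
have [<-|ne] := eqVneq e e'; first by rewrite (negbTE (irr e)) ltnn eqxx orbF.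
rewrite orbF; apply/idP/andP => [h|[/eqP th lt]]; first by rewrite (same_thr _ _ h) s_po.
case: (total _ _ th) => [|//|h]; first exact/eqP.
by have := s_po h; lia.
Qed.

Lemma channel_pairs ch : exists2 P,
  [seq c <- sigma | chn c == ch] = flatten_pairs P & all (fun q => rf'_ q.1 q.2) P.
Proof.
apply: (flatten_pairs_exists (issnd := is_snd)); first by rewrite filter_uniq ?uniq_layout.
- by move=> a b /rf'_adjacent[sa rb _ _ _]; rewrite /snd_rcv sa.
- move=> a; rewrite mem_filter mem_sigma => /andP[/eqP <- aS] sa.
  have [b [ab bS]] := rf'_from_snd num_okP aS sa.
  have [_ _ ba _ _] := rf'_adjacent ab.
  exists b; rewrite mem_filter mem_sigma bS ba eqxx; split=> //.
  exact: adjacent_index_filter (rf'_adjacent ab).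
- move=> b; rewrite mem_filter mem_sigma => /andP[/eqP <- bS] rb.
  have [a [ab aS]] := rf'_to_rcv rf_ok num_okP bS rb.
  have [_ _ ba _ _] := rf'_adjacent ab.
  exists a; rewrite mem_filter mem_sigma aS -ba eqxx; split=> //.
  by rewrite ba; apply: adjacent_index_filter (rf'_adjacent ab).
Qed.

Lemma channel_pairs_snd_rcv P : all (fun q => rf'_ q.1 q.2) P -> all (snd_rcv is_snd) P.
Proof. by apply: sub_all => q /rf'_adjacent[sa rb _ _ _]; rewrite /snd_rcv sa. Qed.

Lemma rf'_exec_rf a b : a \in S'_ -> b \in S'_ -> rf'_ a b <-> exec_rf is_snd chn sigma a b.
Proof.
move=> aS bS; split=> [ab|[ch hrf]]; last first.
  have [P eP RP] := channel_pairs ch.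
  have := (exec_rf_flatten_pairs (channel_pairs_snd_rcv RP) eP a b).1 hrf.
  exact: (allP RP).
have [sa _ ba _ _] := rf'_adjacent ab; have [P eP RP] := channel_pairs (chn a).
have PsR := channel_pairs_snd_rcv RP; have [sndP rcvP] := filter_flatten_pairs PsR.
exists (chn a); apply/(exec_rf_flatten_pairs PsR eP).
have : a \in filter is_snd (flatten_pairs P).
  by rewrite mem_filter sa -eP mem_filter eqxx mem_sigma.
rewrite sndP => /mapP[[a' b'] qP /= eaa']; rewrite -eaa' in qP *.
have b'f : b' \in [seq c <- sigma | chn c == chn a].
  have : b' \in filter (predC is_snd) (flatten_pairs P) by rewrite rcvP (map_f snd qP).
  by rewrite -eP mem_filter => /andP[].
have b'S : b' \in S'_ by move: b'f; rewrite mem_filter mem_sigma => /andP[].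
suff <- : b' = b by [].
apply: index_inj_l b'f _.
rewrite (adjacent_index_filter aS b'S (rf'_adjacent (allP RP _ qP))).
by rewrite (adjacent_index_filter aS bS (rf'_adjacent ab)).
Qed.

Lemma sc_vch_consistent : vch_instance_consistent thr isw reg po rf num.
Proof.
exists sigma; split; first exact: uniq_layout.
- by move=> a; rewrite mem_sigma.
- exact: po_sigma.
- split=> // ch _ n; have [P eP /channel_pairs_snd_rcv PsR] := channel_pairs ch.
  by have := balanced_on_flatten_pairs PsR eP n.
exact: rf'_exec_rf.
Qed.

End Forward.

Section Backward.
Variables (E : finType) (Th Rg : eqType) (thr : E -> Th) (isw : E -> bool)
  (reg : E -> Rg) (po : rel E) (rf : E -> E) (num : E -> nat).
Hypotheses (rf_ok : vsc_rf_ok isw reg rf) (num_okP : num_ok isw rf num).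

Local Notation M := (Mseq isw reg rf num).
Local Notation m_ := (m_of isw reg rf).
Local Notation is_snd := (issnd' isw reg rf num).
Local Notation chn := (chan' isw reg rf num).
Local Notation S'_ := (S' isw reg rf num).
Local Notation rf'_ := (rf' isw reg rf num).

Variable sigma : seq (E * nat).
Hypotheses (sigma_uniq : uniq sigma) (sigma_S' : sigma =i S'_)
  (sigma_po : forall a b, a \in S'_ -> b \in S'_ -> po' po a b = exec_po (thr' thr) sigma a b)
  (sigma_wf : well_formed (thr' thr) is_snd chn (@cap' Rg) sigma)
  (sigma_rf : forall a b, a \in S'_ -> b \in S'_ -> rf'_ a b <-> exec_rf is_snd chn sigma a b).

Local Notation ix a := (index a sigma).
Local Notation final e := (e, (size (M e)).-1).

Lemma sigma_balanced : balanced is_snd chn sigma.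
Proof. exact: well_formed_balanced sigma_wf. Qed.

Lemma first_in_S' e : (e, 0) \in S'_.
Proof. by rewrite mem_S'; have := size_Mseq_gt1 isw reg rf num e; lia. Qed.

Lemma final_in_S' e : final e \in S'_.
Proof. by rewrite mem_S'; have := size_Mseq_gt1 isw reg rf num e; lia. Qed.

Lemma index_sigma_inj a b : a \in S'_ -> ix a = ix b -> a = b.
Proof. by rewrite -sigma_S'; apply: index_inj_l. Qed.

Lemma index_po_lt e k k' : (e, k) \in S'_ -> (e, k') \in S'_ -> k < k' ->
  ix (e, k) < ix (e, k').
Proof.
by move=> eS e'S lt; move: (sigma_po eS e'S); rewrite /po' /= eqxx lt => /esym/and4P[].
Qed.

Lemma index_block_bounds e k : (e, k) \in S'_ -> ix (e, 0) <= ix (e, k) <= ix (final e).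
Proof.
move=> eS; have := eS; rewrite mem_S' => lt; apply/andP; split.
  by case: k eS {lt} => // k eS; apply/ltnW/index_po_lt; rewrite ?first_in_S'.
have [kl|lk] := ltnP k (size (M e)).-1; first by apply/ltnW/index_po_lt; rewrite ?final_in_S'.
by have -> : k = (size (M e)).-1 by lia.
Qed.

(* (e, 0) and (final e) are matched on the lock channel, which has capacity one *)
Lemma final_before_next_first e e' : e != e' -> ix (e, 0) < ix (e', 0) ->
  ix (final e) < ix (e', 0).
Proof.
move=> ne lt; have lock : rf'_ (e, 0) (final e) by rewrite /rf' /= !eqxx.
have := (sigma_rf (first_in_S' e) (final_in_S' e)).1 lock.
move=> /(exec_rf_rank sigma_uniq) [ch [ain zin sa rz rk]].
apply: (matched_rcv_before_next_snd sigma_balanced ain zin _ sa rz _ rk lt).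
  by rewrite sigma_S' first_in_S'.
by move: sa; rewrite /snd_on !chan_first !issnd_first.
Qed.

Lemma index_block_lt e e' k k' : e != e' -> ix (e, 0) < ix (e', 0) ->
  (e, k) \in S'_ -> (e', k') \in S'_ -> ix (e, k) < ix (e', k').
Proof.
move=> ne lt eS e'S; have := final_before_next_first ne lt.
by have := index_block_bounds eS; have := index_block_bounds e'S; lia.
Qed.

Lemma index_block_lt_first e e' k k' : e != e' -> (e, k) \in S'_ -> (e', k') \in S'_ ->
  ix (e, k) < ix (e', k') -> ix (e, 0) < ix (e', 0).
Proof.
move=> ne eS e'S lt; have ne' : e' != e by rewrite eq_sym.
case: (ltngtP (ix (e, 0)) (ix (e', 0))) => // c.
  by have := index_block_lt ne' c e'S eS; lia.
by move: (index_sigma_inj (first_in_S' e) c) ne => -[->]; rewrite eqxx.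
Qed.

Definition first_le e e' := ix (e, 0) <= ix (e', 0).
Definition block_order := sort first_le (enum E).

Lemma block_order_uniq : uniq block_order.
Proof. by rewrite sort_uniq enum_uniq. Qed.

Lemma mem_block_order e : e \in block_order.
Proof. by rewrite mem_sort mem_enum. Qed.

Lemma index_block_order_lt e e' :
  (index e block_order < index e' block_order) = (ix (e, 0) < ix (e', 0)).
Proof.
have tr : transitive first_le by move=> x y z; apply: leq_trans.
have so : sorted first_le block_order by apply/sort_sorted => x y; apply: leq_total.
have inj x y : ix (x, 0) = ix (y, 0) -> x = y by move/(index_sigma_inj (first_in_S' x)) => [].
case: (ltngtP (index e block_order) (index e' block_order)) => c.
- have := sorted_ltn_index tr so e e' (mem_block_order e) (mem_block_order e') c.
  rewrite /first_le leq_eqVlt => /orP[/eqP/inj ee|->] //.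
  by rewrite ee ltnn in c.
- have := sorted_ltn_index tr so e' e (mem_block_order e') (mem_block_order e) c.
  by rewrite /first_le => le; rewrite ltnNge le.
- by rewrite (index_inj_l (mem_block_order e) c) ltnn.
Qed.

Section Read.
Variable r : E.
Hypothesis r_read : ~~ isw r.

Local Notation w := (rf r).
Local Notation i := (num r).

Lemma read_send_in_S' : (w, i) \in S'_.
Proof.
have [ww _] := rf_ok r_read; have := num_okP.1 r r_read.
by rewrite mem_S' size_Mseq_write //; have := p_of_le_m_of reg rf ww; lia.
Qed.

Lemma read_rcv_in_S' : (r, 1) \in S'_.
Proof. by rewrite mem_S' Mseq_read. Qed.

Lemma read_rank : exists ch,
  [/\ (w, i) \in sigma, (r, 1) \in sigma, snd_on is_snd chn ch (w, i),
      rcv_on is_snd chn ch (r, 1) &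
      rank sigma (snd_on is_snd chn ch) (w, i) = rank sigma (rcv_on is_snd chn ch) (r, 1)].
Proof.
apply: exec_rf_rank sigma_uniq _; apply/(sigma_rf read_send_in_S' read_rcv_in_S').
by have [ww _] := rf_ok r_read; rewrite /rf' /= ww r_read !eqxx orbT.
Qed.

Lemma write_before_read : ix (w, 0) < ix (r, 0).
Proof.
have [ww _] := rf_ok r_read; have wr : w != r by apply: contraTneq ww => ->.
have [ch [wsig rsig sw rr rk]] := read_rank.
have := matched_snd_before_rcv sigma_balanced wsig rsig sw rr rk.
exact: index_block_lt_first wr read_send_in_S' read_rcv_in_S'.
Qed.

(* a write w' on the same register between w and r would send on ch_x^i
   between the send of w and the receive of r *)
Lemma no_write_between w' : isw w' -> reg w' = reg r -> w' != w ->
  ~~ (ix (w, 0) < ix (w', 0) < ix (r, 0)).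
Proof.
move=> w'w rg nw'; apply/negP => /andP[l1 l2].
have [ww rw] := rf_ok r_read; have rng := num_okP.1 r r_read.
have pm := p_of_le_m_of reg rf ww.
have em : m_ (reg w') = m_ (reg w) by rewrite rg rw.
have iS : 0 < i <= m_ (reg w') by rewrite em; lia.
have w'S : (w', i) \in S'_ by rewrite mem_S' size_Mseq_write //; lia.
have [ch [wsig rsig sw rr rk]] := read_rank.
have sw' : snd_on is_snd chn ch (w', i).
  have iw : 0 < i <= m_ (reg w) by lia.
  have [sw1 cw1] := snd_write num ww iw; have [sw2 cw2] := snd_write num w'w iS.
  by move: sw; rewrite /snd_on sw1 sw2 cw1 cw2 rg rw.
have w'sig : (w', i) \in sigma by rewrite sigma_S'.
have ww' : w != w' by rewrite eq_sym.
have w'r : w' != r by apply: contraTneq w'w => ->; rewrite r_read.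
have r_w' := matched_rcv_before_next_snd sigma_balanced wsig rsig w'sig sw rr sw' rk
  (index_block_lt ww' l1 read_send_in_S' w'S).
by have := ltn_trans r_w' (index_block_lt w'r l2 w'S read_rcv_in_S'); rewrite ltnn.
Qed.

End Read.

Lemma vch_sc_consistent : seq_consistent isw reg po rf.
Proof.
exists block_order; split; first exact: block_order_uniq.
- exact: mem_block_order.
- move=> a b ab; rewrite index_block_order_lt.
  have := sigma_po (first_in_S' a) (first_in_S' b).
  by rewrite /po' /= ab orbT => /esym/and4P[].
move=> r rr; rewrite !index_block_order_lt; split; first exact: write_before_read.
by move=> w' w'w rg /eqP nw'; rewrite !index_block_order_lt; apply/negP/no_write_between.
Qed.

End Backward.

Theorem mainTheorem13 (E : finType) (Th Rg : eqType) (thr : E -> Th)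
  (isw : E -> bool) (reg : E -> Rg) (po : rel E) (rf : E -> E) (num : E -> nat) :
  vsc_po_ok thr po ->
  vsc_rf_ok isw reg rf ->
  num_ok isw rf num ->
  seq_consistent isw reg po rf <-> vch_instance_consistent thr isw reg po rf num.
Proof.
move=> po_ok rf_ok num_okP; split.
- case=> s [s_uniq s_all s_po s_rf].
  exact: (sc_vch_consistent po_ok rf_ok num_okP s_uniq s_all s_po s_rf).
- case=> sigma [sigma_uniq sigma_S' sigma_po sigma_wf sigma_rf].
  exact: (vch_sc_consistent rf_ok num_okP sigma_uniq sigma_S' sigma_po sigma_wf sigma_rf).
Qed.
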